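(* In the I-phase model, for every formula $A$: (1) for every formula $D$, every $n\ge 0$ and $T_1,\dots,T_n$ each a closed term or an atom, if $c^D T_1\cdots T_n\in[\![A]\!]$ then $c^D T_1\cdots T_n\in A^\dagger$; and (2) $A^\dagger\subseteq[\![A]\!]$.
   Context: System $\mathbf{IL}_{\mathbf{at}}$: formulas $A ::= X\mid A\to B\mid\forall X.A$ ($X$ atoms); terms $t ::= x\mid c^A\mid\lambda x.t\mid ts\mid\Lambda X.t\mid tX$ (a term-constant $c^A$ for each formula; $tX$ only with $X$ an atom). $\Gamma\vdash t:A$ derivable by: $\Gamma,x:A\vdash x:A$; $\Gamma\vdash c^A:A$; $\to$-introduction/elimination (abstraction/application); $\forall$-introduction ($\Gamma\vdash\Lambda X.t:\forall X.A$ from $\Gamma\vdash t:A$, $X$ not free in formulas of $\Gamma$); $\forall$-elimination ($\Gamma\vdash tY:A[X:=Y]$ from $\Gamma\vdash t:\forall X.A$, $Y$ an atom). $\beta$-reduction $(\lambda x.t)s\to_\beta t[x:=s]$, $(\Lambda X.t)Y\to_\beta t[X:=Y]$ in any subterm position; normal = no redex; $\twoheadrightarrow$ reflexive-transitive closure of $\to_\beta$. $\eta$-expansion: $t\to_{\eta^{-1}}\lambda x.(tx)$ ($x\notin FV(t)$), $t\to_{\eta^{-1}}\Lambda X.(tX)$ ($X\notin FV(t)$). Closed term = no free term-variables. $[\![A]\!]$ = closed terms $t$ with $t\twoheadrightarrow s$ for some normal $s$ such that $\vdash s:A$ is derivable. I-phase model: interpretation of formulas as sets of closed terms: $X^\dagger=[\![X]\!]$;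 $(B\to C)^\dagger$ = closed $t$ such that $t\twoheadrightarrow u\to_{\eta^{-1}}\lambda x.(ux)$ for some $u$ with $x\notin FV(u)$ and $ux[x:=s]\in C^\dagger$ for all $s\in B^\dagger$; $(\forall X.A)^\dagger$ = closed $t$ such that $t\twoheadrightarrow u\to_{\eta^{-1}}\Lambda X.(uX)$ for some $u$ with $X\notin FV(u)$ and $uX[X:=Y]\in(A[X:=Y])^\dagger$ for all atoms $Y$. *)

(* System IL_at with de Bruijn indices for both atoms and
   term variables. *)
From Stdlib Require Import List Relations.
Import ListNotations.

(** Formulas: atoms are de Bruijn indices (free atoms = indices not bound
    by an enclosing [All]). *)
Inductive form : Type :=
| Atom (X : nat)
| Arr (A B : form)
| All (A : form).

(** Terms: term variables are de Bruijn indices bound by [Lam];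
    atoms (in [TApp] and inside the formulas of constants) are de Bruijn
    indices bound by [TLam]. *)
Inductive term : Type :=
| Var (x : nat)
| Cst (A : form)
| Lam (t : term)
| App (t s : term)
| TLam (t : term)
| TApp (t : term) (X : nat).

Definition scons {T : Type} (x : T) (f : nat -> T) (n : nat) : T :=
  match n with 0 => x | S m => f m end.

Definition up_ren (xi : nat -> nat) : nat -> nat := scons 0 (fun n => S (xi n)).

Fixpoint fren (xi : nat -> nat) (A : form) : form :=
  match A with
  | Atom X => Atom (xi X)
  | Arr A B => Arr (fren xi A) (fren xi B)
  | All A => All (fren (up_ren xi) A)
  end.

Definition fsubst1 (A : form) (Y : nat) : form := fren (scons Y (fun n => n)) A.

Fixpoint tren (xi : nat -> nat) (t : term) : term :=
  match t with
  | Var x => Var x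
  | Cst A => Cst (fren xi A)
  | Lam t => Lam (tren xi t)
  | App t s => App (tren xi t) (tren xi s)
  | TLam t => TLam (tren (up_ren xi) t)
  | TApp t X => TApp (tren xi t) (xi X)
  end.

Fixpoint vren (xi : nat -> nat) (t : term) : term :=
  match t with
  | Var x => Var (xi x)
  | Cst A => Cst A
  | Lam t => Lam (vren (up_ren xi) t)
  | App t s => App (vren xi t) (vren xi s)
  | TLam t => TLam (vren xi t)
  | TApp t X => TApp (vren xi t) X
  end.

Fixpoint tsubst (sigma : nat -> term) (t : term) : term :=
  match t with
  | Var x => sigma x
  | Cst A => Cst A
  | Lam t => Lam (tsubst (scons (Var 0) (fun n => vren S (sigma n))) t)
  | App t s => App (tsubst sigma t) (tsubst sigma s)
  | TLam t => TLam (tsubst (fun n => tren S (sigma n)) t)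
  | TApp t X => TApp (tsubst sigma t) X
  end.

Definition subst1 (t s : term) : term := tsubst (scons s Var) t.
Definition tsubst1 (t : term) (Y : nat) : term := tren (scons Y (fun n => n)) t.

(** Typing: [has_type G t A] is [G |- t : A]; variable [Var n] has the
    n-th formula of [G].  The side condition "X not free in G" of
    forall-introduction is expressed by shifting the atoms of [G]. *)
Inductive has_type : list form -> term -> form -> Prop :=
| ty_var G n A : nth_error G n = Some A -> has_type G (Var n) A
| ty_cst G A : has_type G (Cst A) A
| ty_lam G t A B : has_type (A :: G) t B -> has_type G (Lam t) (Arr A B)
| ty_app G t s A B : has_type G t (Arr A B) -> has_type G s A ->
    has_type G (App t s) B
| ty_tlam G t A : has_type (map (fren S) G) t A -> has_type G (TLam t) (All A)
| ty_tapp G t A Y : has_type G t (All A) -> has_type G (TApp t Y) (fsubst1 A Y).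

Inductive step : term -> term -> Prop :=
| st_beta t s : step (App (Lam t) s) (subst1 t s)
| st_tbeta t Y : step (TApp (TLam t) Y) (tsubst1 t Y)
| st_lam t t' : step t t' -> step (Lam t) (Lam t')
| st_appl t t' s : step t t' -> step (App t s) (App t' s)
| st_appr t s s' : step s s' -> step (App t s) (App t s')
| st_tlam t t' : step t t' -> step (TLam t) (TLam t')
| st_tapp t t' Y : step t t' -> step (TApp t Y) (TApp t' Y).

Definition red : term -> term -> Prop := clos_refl_trans term step.

Definition normal (t : term) : Prop := forall t', ~ step t t'.

Fixpoint closed_at (k : nat) (t : term) : Prop :=
  match t with
  | Var x => x < k
  | Cst _ => True
  | Lam t => closed_at (S k) t
  | App t s => closed_at k t /\ closed_at k s
  | TLam t => closed_at k t
  | TApp t _ => closed_at k t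
  end.

Definition closed (t : term) : Prop := closed_at 0 t.

Definition sem (A : form) (t : term) : Prop :=
  closed t /\ exists s, red t s /\ normal s /\ has_type [] s A.

(** The body of the eta-expansions: for [u ->eta^-1 Lam (App u' x)] with
    x not free in u (de Bruijn: u' = vren S u, x = Var 0), the term
    [u x [x:=s]]; and for [u ->eta^-1 TLam (TApp u' X)], the term
    [u X [X:=Y]]. *)
Definition eta_body (u : term) : term := App (vren S u) (Var 0).
Definition teta_body (u : term) : term := TApp (tren S u) 0.

(** The I-phase interpretation.  [dag A rho] is the interpretation of the
    formula [fren rho A] (rho renames the free atoms of A); this
    environment makes the recursion structural, since
    (forall X.A)[X:=Y] unfolds to a renaming of A. *)
Fixpoint dag (A : form) (rho : nat -> nat) (t : term) : Prop :=
  match A with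
  | Atom X => sem (Atom (rho X)) t
  | Arr B C =>
      closed t /\ exists u, red t u /\
        forall s, dag B rho s -> dag C rho (subst1 (eta_body u) s)
  | All B =>
      closed t /\ exists u, red t u /\
        forall Y : nat, dag B (scons Y rho) (tsubst1 (teta_body u) Y)
  end.

Definition dagger (A : form) (t : term) : Prop := dag A (fun n => n) t.

Inductive arg : Type := ATm (t : term) | AAt (X : nat).

Definition arg_ok (a : arg) : Prop :=
  match a with ATm t => closed t | AAt _ => True end.

Definition apply_args (h : term) (l : list arg) : term :=
  fold_left (fun acc a => match a with ATm s => App acc s | AAt X => TApp acc X end) l h.

(* Both parts are proved together by induction on A, for the interpretation
   of every atom renaming of A, with (1) strengthened to all constant-headed
   terms.  For (1): a normal constant-headed term stays normal when applied
   to a normal term or to an atom, so c T s is in [[C]] for s in B^dagger,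
   which is contained in [[B]] by (2), and c T Y is in [[B[Y]]]; the
   induction hypothesis puts these in C^dagger and B[Y]^dagger.  For (2): by
   (1) the constant c^B lies in B^dagger, so u c^B has a normal form of type
   C; it is either u' c^B with u' normal, or comes from u ->> lambda x.w,
   and then replacing c^B by x types the normal form of w.  For forall X.B
   one instantiates with an atom Y fresh for u and B; since reduction and
   typing commute with atom renamings, Y can be renamed back to X. *)

From Stdlib Require Import List Relations Lia PeanoNat.
Import ListNotations.

(** * Renaming and substitution *)

Lemma up_ren_ext f g : (forall x, f x = g x) -> forall x, up_ren f x = up_ren g x.
Proof. intros H [|x]; simpl; auto. Qed.

Lemma fren_ext A : forall f g, (forall x, f x = g x) -> fren f A = fren g A.
Proof. induction A; intros f g H; simpl; f_equal; auto using up_ren_ext. Qed.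

Lemma fren_comp A : forall f g, fren f (fren g A) = fren (fun x => f (g x)) A.
Proof.
  induction A; intros f g; simpl; f_equal; auto.
  rewrite IHA. apply fren_ext. intros [|x]; reflexivity.
Qed.

Lemma fren_id A : forall f, (forall x, f x = x) -> fren f A = A.
Proof. induction A; intros f H; simpl; f_equal; auto. apply IHA. intros [|x]; simpl; auto. Qed.

Lemma tren_ext t : forall f g, (forall x, f x = g x) -> tren f t = tren g t.
Proof. induction t; intros f g H; simpl; f_equal; auto using fren_ext, up_ren_ext. Qed.

Lemma tren_comp t : forall f g, tren f (tren g t) = tren (fun x => f (g x)) t.
Proof.
  induction t; intros f g; simpl; f_equal; auto using fren_comp.
  rewrite IHt. apply tren_ext. intros [|x]; reflexivity.
Qed.

Lemma tren_id t : forall f, (forall x, f x = x) -> tren f t = t.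
Proof. induction t; intros f H; simpl; f_equal; auto using fren_id. apply IHt. intros [|x]; simpl; auto. Qed.

Lemma vren_ext t : forall f g, (forall x, f x = g x) -> vren f t = vren g t.
Proof. induction t; intros f g H; simpl; f_equal; auto using up_ren_ext. Qed.

Lemma vren_comp t : forall f g, vren f (vren g t) = vren (fun x => f (g x)) t.
Proof.
  induction t; intros f g; simpl; f_equal; auto.
  rewrite IHt. apply vren_ext. intros [|x]; reflexivity.
Qed.

Lemma tren_vren t : forall xi f, tren xi (vren f t) = vren f (tren xi t).
Proof. induction t; intros xi f; simpl; f_equal; auto. Qed.

Lemma tsubst_ext t : forall s r, (forall n, s n = r n) -> tsubst s t = tsubst r t.
Proof.
  induction t; intros s r H; simpl; f_equal; auto.
  - apply IHt. intros [|n]; simpl; auto. rewrite H; auto.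
  - apply IHt. intros n; rewrite H; auto.
Qed.

Lemma tsubst_vren t : forall s f, tsubst s (vren f t) = tsubst (fun n => s (f n)) t.
Proof.
  induction t; intros s f; simpl; f_equal; auto.
  - rewrite IHt. apply tsubst_ext. intros [|n]; reflexivity.
  - rewrite IHt. reflexivity.
Qed.

Lemma vren_tsubst t : forall s f, vren f (tsubst s t) = tsubst (fun n => vren f (s n)) t.
Proof.
  induction t; intros s f; simpl; f_equal; auto.
  - rewrite IHt. apply tsubst_ext. intros [|n]; simpl; [reflexivity|].
    rewrite !vren_comp. apply vren_ext. reflexivity.
  - rewrite IHt. apply tsubst_ext. intros n. symmetry; apply tren_vren.
Qed.

Lemma tren_tsubst t : forall xi s,
  tren xi (tsubst s t) = tsubst (fun n => tren xi (s n)) (tren xi t).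
Proof.
  induction t; intros xi s; simpl; f_equal; auto.
  - rewrite IHt. apply tsubst_ext. intros [|n]; simpl; [reflexivity|]. apply tren_vren.
  - rewrite IHt. apply tsubst_ext. intros n. rewrite !tren_comp. apply tren_ext. reflexivity.
Qed.

Lemma tsubst_comp t : forall s1 s2,
  tsubst s1 (tsubst s2 t) = tsubst (fun n => tsubst s1 (s2 n)) t.
Proof.
  induction t; intros s1 s2; simpl; f_equal; auto.
  - rewrite IHt. apply tsubst_ext. intros [|n]; simpl; [reflexivity|].
    rewrite tsubst_vren, vren_tsubst. apply tsubst_ext. reflexivity.
  - rewrite IHt. apply tsubst_ext. intros n. rewrite tren_tsubst. reflexivity.
Qed.

Lemma tsubst_id t : forall s, (forall n, s n = Var n) -> tsubst s t = t.
Proof.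
  induction t; intros s H; simpl; f_equal; auto.
  - apply IHt. intros [|n]; simpl; auto. rewrite H; auto.
  - apply IHt. intros n; rewrite H; auto.
Qed.

Lemma subst1_eta_body u s : subst1 (eta_body u) s = App u s.
Proof.
  unfold subst1, eta_body; simpl. f_equal.
  rewrite tsubst_vren. apply tsubst_id. reflexivity.
Qed.

Lemma tsubst1_teta_body u Y : tsubst1 (teta_body u) Y = TApp u Y.
Proof. unfold tsubst1, teta_body; simpl. f_equal. rewrite tren_comp. apply tren_id. reflexivity. Qed.

Lemma tsubst_subst1 s a b : tsubst s (subst1 a b) =
  subst1 (tsubst (scons (Var 0) (fun n => vren S (s n))) a) (tsubst s b).
Proof.
  unfold subst1; rewrite !tsubst_comp; apply tsubst_ext; intros [|n]; simpl; [reflexivity|].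
  rewrite tsubst_vren, tsubst_id; reflexivity.
Qed.

Lemma tsubst_tsubst1 s a Y :
  tsubst s (tsubst1 a Y) = tsubst1 (tsubst (fun n => tren S (s n)) a) Y.
Proof.
  unfold tsubst1. symmetry. rewrite tren_tsubst. apply tsubst_ext. intros n.
  rewrite tren_comp. apply tren_id. reflexivity.
Qed.

Lemma tren_subst1 xi a b : tren xi (subst1 a b) = subst1 (tren xi a) (tren xi b).
Proof. unfold subst1; rewrite tren_tsubst; apply tsubst_ext; intros [|n]; reflexivity. Qed.

Lemma tren_tsubst1 xi a Y : tren xi (tsubst1 a Y) = tsubst1 (tren (up_ren xi) a) (xi Y).
Proof. unfold tsubst1; rewrite !tren_comp; apply tren_ext; intros [|n]; reflexivity. Qed.

Lemma fren_fsubst1 xi A Y : fren xi (fsubst1 A Y) = fsubst1 (fren (up_ren xi) A) (xi Y).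
Proof. unfold fsubst1; rewrite !fren_comp; apply fren_ext; intros [|n]; reflexivity. Qed.

Lemma fren_scons A Y rho : fren (scons Y rho) A = fsubst1 (fren (up_ren rho) A) Y.
Proof. unfold fsubst1; rewrite fren_comp; apply fren_ext; intros [|k]; reflexivity. Qed.

(** * Reduction *)

Ltac step_congruence :=
  first [ apply st_lam | apply st_appl | apply st_appr | apply st_tlam | apply st_tapp ];
  solve [auto].

Lemma step_tren t t' : step t t' -> forall xi, step (tren xi t) (tren xi t').
Proof.
  induction 1; intros xi; simpl;
    try (rewrite tren_subst1; apply st_beta); try (rewrite tren_tsubst1; apply st_tbeta);
    step_congruence.
Qed.

Lemma step_tsubst t t' : step t t' -> forall s, step (tsubst s t) (tsubst s t').
Proof.
  induction 1; intros sg; simpl;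
    try (rewrite tsubst_subst1; apply st_beta); try (rewrite tsubst_tsubst1; apply st_tbeta);
    step_congruence.
Qed.

Lemma step_tren_inv a b : step a b -> forall xi w, a = tren xi w ->
  exists w', step w w' /\ b = tren xi w'.
Proof.
  induction 1; intros xi w E; destruct w; simpl in E; try discriminate;
    injection E; intros; subst.
  - destruct w1; simpl in *; try discriminate. injection H0; intros; subst.
    eexists; split; [apply st_beta | symmetry; apply tren_subst1].
  - destruct w; simpl in *; try discriminate. injection H0; intros; subst.
    eexists; split; [apply st_tbeta | symmetry; apply tren_tsubst1].
  - destruct (IHstep _ _ eq_refl) as [w' [Hs ->]]. now exists (Lam w'); split; [constructor|].
  - destruct (IHstep _ _ eq_refl) as [w' [Hs ->]]. now exists (App w' w2); split; [constructor|].
  - destruct (IHstep _ _ eq_refl) as [w' [Hs ->]]. now exists (App w1 w'); split; [constructor|].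
  - destruct (IHstep _ _ eq_refl) as [w' [Hs ->]]. now exists (TLam w'); split; [constructor|].
  - destruct (IHstep _ _ eq_refl) as [w' [Hs ->]]. now exists (TApp w' X); split; [constructor|].
Qed.

Definition var_or_cst_subst (s : nat -> term) : Prop :=
  forall n, (exists m, s n = Var m) \/ (exists D, s n = Cst D).

Lemma var_or_cst_subst_up s : var_or_cst_subst s ->
  var_or_cst_subst (scons (Var 0) (fun n => vren S (s n))).
Proof.
  intros H [|n]; simpl; [left; eauto|].
  destruct (H n) as [[m Hm]|[D Hm]]; rewrite Hm; simpl; eauto.
Qed.

Lemma var_or_cst_subst_tup s : var_or_cst_subst s -> var_or_cst_subst (fun n => tren S (s n)).
Proof. intros H n. destruct (H n) as [[m Hm]|[D Hm]]; rewrite Hm; simpl; eauto. Qed.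

(* A variable-or-constant substitution creates no redex, so every step of
   [tsubst s w] comes from a step of [w]. *)
Lemma step_tsubst_inv a b : step a b -> forall s w, var_or_cst_subst s -> a = tsubst s w ->
  exists w', step w w' /\ b = tsubst s w'.
Proof.
  induction 1; intros sg w Hs E;
    (destruct w as [n| | | | |]; simpl in E;
     [destruct (Hs n) as [[m Hm]|[D Hm]]; rewrite Hm in E; discriminate | ..]);
    try discriminate; injection E; intros; subst.
  - destruct w1 as [n| | | | |]; simpl in *; try discriminate;
      [destruct (Hs n) as [[m Hm]|[D Hm]]; rewrite Hm in *; discriminate |].
    injection H0; intros; subst.
    eexists; split; [apply st_beta | symmetry; apply tsubst_subst1].
  - destruct w as [n| | | | |]; simpl in *; try discriminate;
      [destruct (Hs n) as [[m Hm]|[D Hm]]; rewrite Hm in *; discriminate |].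
    injection H0; intros; subst.
    eexists; split; [apply st_tbeta | symmetry; apply tsubst_tsubst1].
  - destruct (IHstep _ _ (var_or_cst_subst_up _ Hs) eq_refl) as [w' [Hw ->]].
    now exists (Lam w'); split; [constructor|].
  - destruct (IHstep _ _ Hs eq_refl) as [w' [Hw ->]].
    now exists (App w' w2); split; [constructor|].
  - destruct (IHstep _ _ Hs eq_refl) as [w' [Hw ->]].
    now exists (App w1 w'); split; [constructor|].
  - destruct (IHstep _ _ (var_or_cst_subst_tup _ Hs) eq_refl) as [w' [Hw ->]].
    now exists (TLam w'); split; [constructor|].
  - destruct (IHstep _ _ Hs eq_refl) as [w' [Hw ->]].
    now exists (TApp w' X); split; [constructor|].
Qed.

Lemma red_lift (f : term -> term) : (forall a b, step a b -> step (f a) (f b)) ->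
  forall a b, red a b -> red (f a) (f b).
Proof. intros Hf a b; induction 1; [apply rt_step | apply rt_refl | eapply rt_trans]; eauto. Qed.

Lemma red_app_l a b s : red a b -> red (App a s) (App b s).
Proof. apply (red_lift (fun a => App a s)). constructor; auto. Qed.

Lemma red_app_r a b s : red a b -> red (App s a) (App s b).
Proof. apply red_lift. constructor; auto. Qed.

Lemma red_tapp a b Y : red a b -> red (TApp a Y) (TApp b Y).
Proof. apply (red_lift (fun a => TApp a Y)). constructor; auto. Qed.

Lemma red_lam a b : red a b -> red (Lam a) (Lam b).
Proof. apply red_lift. constructor; auto. Qed.

Lemma red_tlam a b : red a b -> red (TLam a) (TLam b).
Proof. apply red_lift. constructor; auto. Qed.

Lemma red_normal_image_inv (f : term -> term) :
  (forall a b, step a b -> step (f a) (f b)) ->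
  (forall w b, step (f w) b -> exists w', step w w' /\ b = f w') ->
  forall w n, red (f w) n -> normal n -> exists w', red w w' /\ normal w' /\ n = f w'.
Proof.
  intros Hf Hinv w n H Hn. apply clos_rt_rt1n in H. remember (f w) as a eqn:E.
  revert w E. induction H as [a|a b n Hab Hbn IH]; intros w E; subst.
  - exists w. repeat split; [apply rt_refl|]. intros w' Hw. exact (Hn _ (Hf _ _ Hw)).
  - destruct (Hinv _ _ Hab) as [w1 [Hw1 ->]].
    destruct (IH Hn w1 eq_refl) as [w' [Hr [Hnw ->]]].
    exists w'. split; [eapply rt_trans; [apply rt_step|]; eauto | auto].
Qed.

Lemma red_tren_normal_inv xi w n : red (tren xi w) n -> normal n ->
  exists w', red w w' /\ normal w' /\ n = tren xi w'.
Proof.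
  apply red_normal_image_inv.
  - intros; apply step_tren; auto.
  - intros; eapply step_tren_inv; eauto.
Qed.

Lemma red_tsubst_normal_inv s w n : var_or_cst_subst s -> red (tsubst s w) n -> normal n ->
  exists w', red w w' /\ normal w' /\ n = tsubst s w'.
Proof.
  intros Hs. apply red_normal_image_inv.
  - intros; apply step_tsubst; auto.
  - intros; eapply step_tsubst_inv; eauto.
Qed.

Lemma red_app_normal_inv u s n : normal s -> red (App u s) n -> normal n ->
  (exists u', red u u' /\ n = App u' s) \/
  (exists w, red u (Lam w) /\ red (subst1 w s) n).
Proof.
  intros Hs H Hn. apply clos_rt_rt1n in H. remember (App u s) as a eqn:E.
  revert u E. induction H as [a|a b n Hab Hbn IH]; intros u E; subst.
  - left. exists u. split; [apply rt_refl | reflexivity].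
  - inversion Hab; subst.
    + right. exists t. split; [apply rt_refl | apply clos_rt1n_rt; auto].
    + destruct (IH Hn t' eq_refl) as [[u' [Hr ->]]|[w [Hr Hw]]].
      * left. exists u'. split; [eapply rt_trans; [apply rt_step|]; eauto | reflexivity].
      * right. exists w. split; [eapply rt_trans; [apply rt_step|]; eauto | auto].
    + exfalso; eapply Hs; eauto.
Qed.

Lemma red_tapp_normal_inv u Y n : red (TApp u Y) n -> normal n ->
  (exists u', red u u' /\ n = TApp u' Y) \/
  (exists w, red u (TLam w) /\ red (tsubst1 w Y) n).
Proof.
  intros H Hn. apply clos_rt_rt1n in H. remember (TApp u Y) as a eqn:E.
  revert u E. induction H as [a|a b n Hab Hbn IH]; intros u E; subst.
  - left. exists u. split; [apply rt_refl | reflexivity].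
  - inversion Hab; subst.
    + right. exists t. split; [apply rt_refl | apply clos_rt1n_rt; auto].
    + destruct (IH Hn t' eq_refl) as [[u' [Hr ->]]|[w [Hr Hw]]].
      * left. exists u'. split; [eapply rt_trans; [apply rt_step|]; eauto | reflexivity].
      * right. exists w. split; [eapply rt_trans; [apply rt_step|]; eauto | auto].
Qed.

Lemma normal_app_l u s : normal (App u s) -> normal u.
Proof. intros H u' Hu. exact (H _ (st_appl _ _ _ Hu)). Qed.

Lemma normal_tapp u Y : normal (TApp u Y) -> normal u.
Proof. intros H u' Hu. exact (H _ (st_tapp _ _ _ Hu)). Qed.

Lemma normal_lam w : normal w -> normal (Lam w).
Proof. intros H t Ht. inversion Ht; subst. eapply H; eauto. Qed.

Lemma normal_tlam w : normal w -> normal (TLam w).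
Proof. intros H t Ht. inversion Ht; subst. eapply H; eauto. Qed.

Lemma normal_cst D : normal (Cst D).
Proof. intros t H; inversion H. Qed.

(** * Typing *)

Lemma has_type_tren G t A : has_type G t A ->
  forall xi, has_type (map (fren xi) G) (tren xi t) (fren xi A).
Proof.
  induction 1; intros xi; simpl.
  - constructor. apply map_nth_error; auto.
  - constructor.
  - constructor. apply IHhas_type.
  - eapply ty_app; [apply IHhas_type1 | apply IHhas_type2].
  - constructor. specialize (IHhas_type (up_ren xi)). rewrite map_map in *.
    erewrite map_ext; [exact IHhas_type|]. intros a. rewrite !fren_comp. apply fren_ext. reflexivity.
  - rewrite fren_fsubst1. constructor. apply IHhas_type.
Qed.

Lemma has_type_tsubst_inv w : forall G G' s C, var_or_cst_subst s ->
  (forall n X, has_type G (s n) X -> nth_error G' n = Some X) ->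
  has_type G (tsubst s w) C -> has_type G' w C.
Proof.
  induction w; intros G G' sg C Hs HG Ht; simpl in Ht.
  - constructor. auto.
  - inversion Ht; subst; constructor.
  - inversion Ht; subst. constructor.
    eapply IHw; [apply var_or_cst_subst_up; eauto | | eauto].
    intros [|n] X HX; simpl in *.
    + inversion HX; subst. simpl in *. congruence.
    + destruct (Hs n) as [[m Hm]|[D Hm]]; rewrite Hm in *; simpl in HX; inversion HX; subst.
      * apply HG. rewrite Hm. constructor. auto.
      * apply HG. rewrite Hm. constructor.
  - inversion Ht; subst. eapply ty_app; [eapply IHw1 | eapply IHw2]; eauto.
  - inversion Ht; subst. constructor.
    eapply IHw; [apply var_or_cst_subst_tup; eauto | | eauto].
    intros n X HX; simpl in *.
    destruct (Hs n) as [[m Hm]|[D Hm]]; rewrite Hm in *; simpl in HX; inversion HX; subst.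
    + rewrite nth_error_map in *. destruct (nth_error G m) eqn:E; simpl in *; try discriminate.
      injection H2; intros; subst. rewrite (HG n f); auto. rewrite Hm. constructor; auto.
    + rewrite nth_error_map. rewrite (HG n D); auto. rewrite Hm. constructor.
  - inversion Ht; subst. constructor. eapply IHw; eauto.
Qed.

(** * Free atoms *)

Fixpoint atom_in_form (x : nat) (A : form) : Prop :=
  match A with
  | Atom X => x = X
  | Arr A B => atom_in_form x A \/ atom_in_form x B
  | All A => atom_in_form (S x) A
  end.

Fixpoint atom_in_term (x : nat) (t : term) : Prop :=
  match t with
  | Var _ => False
  | Cst A => atom_in_form x A
  | Lam t => atom_in_term x t
  | App t s => atom_in_term x t \/ atom_in_term x s
  | TLam t => atom_in_term (S x) t
  | TApp t X => atom_in_term x t \/ x = X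
  end.

Fixpoint form_atom_bound (A : form) : nat :=
  match A with
  | Atom X => S X
  | Arr A B => max (form_atom_bound A) (form_atom_bound B)
  | All A => pred (form_atom_bound A)
  end.

Fixpoint term_atom_bound (t : term) : nat :=
  match t with
  | Var _ => 0
  | Cst A => form_atom_bound A
  | Lam t => term_atom_bound t
  | App t s => max (term_atom_bound t) (term_atom_bound s)
  | TLam t => pred (term_atom_bound t)
  | TApp t X => max (term_atom_bound t) (S X)
  end.

Lemma form_atom_bound_spec A : forall x, atom_in_form x A -> x < form_atom_bound A.
Proof.
  induction A; intros x H; simpl in *.
  - lia.
  - destruct H as [H|H]; [apply IHA1 in H | apply IHA2 in H]; lia.
  - apply IHA in H. lia.
Qed.

Lemma term_atom_bound_spec t : forall y, atom_in_term y t -> y < term_atom_bound t.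
Proof.
  induction t; intros y H; simpl in *.
  - contradiction.
  - apply form_atom_bound_spec; auto.
  - auto.
  - destruct H as [H|H]; [apply IHt1 in H | apply IHt2 in H]; lia.
  - apply IHt in H. lia.
  - destruct H as [H|H]; [apply IHt in H|]; lia.
Qed.

Lemma exists_fresh_atom t A : exists Y, ~ atom_in_term Y t /\ ~ atom_in_form Y A.
Proof.
  exists (term_atom_bound t + form_atom_bound A). split; intros H;
    [apply term_atom_bound_spec in H | apply form_atom_bound_spec in H]; lia.
Qed.

Lemma atom_in_form_fren A : forall f y, atom_in_form y (fren f A) ->
  exists z, atom_in_form z A /\ y = f z.
Proof.
  induction A; intros f y H; simpl in *.
  - eauto.
  - destruct H as [H|H]; [apply IHA1 in H | apply IHA2 in H]; destruct H as [z [? ?]]; eauto.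
  - apply IHA in H. destruct H as [[|z] [H1 H2]]; simpl in H2; [discriminate|].
    injection H2; intros; subst. eauto.
Qed.

Lemma atom_in_term_tren t : forall f y, atom_in_term y (tren f t) ->
  exists z, atom_in_term z t /\ y = f z.
Proof.
  induction t; intros f y H; simpl in *.
  - contradiction.
  - apply atom_in_form_fren; auto.
  - auto.
  - destruct H as [H|H]; [apply IHt1 in H | apply IHt2 in H]; destruct H as [z [? ?]]; eauto.
  - apply IHt in H. destruct H as [[|z] [H1 H2]]; simpl in H2; [discriminate|].
    injection H2; intros; subst. eauto.
  - destruct H as [H|H]; [apply IHt in H; destruct H as [z [? ?]]; eauto|]. subst; eauto.
Qed.

Lemma atom_in_term_vren t : forall f y, atom_in_term y (vren f t) -> atom_in_term y t.
Proof. induction t; intros f y H; simpl in *; intuition eauto. Qed.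

Lemma atom_in_term_tsubst t : forall s x, atom_in_term x (tsubst s t) ->
  atom_in_term x t \/ exists n, atom_in_term x (s n).
Proof.
  induction t; intros sg y H; simpl in *.
  - right; eauto.
  - auto.
  - apply IHt in H. destruct H as [H|[[|n] H]]; simpl in *; auto; [contradiction|].
    right. exists n. eapply atom_in_term_vren; eauto.
  - destruct H as [H|H]; [apply IHt1 in H | apply IHt2 in H]; intuition.
  - apply IHt in H. destruct H as [H|[n H]]; auto. right. exists n.
    apply atom_in_term_tren in H. destruct H as [z [H1 H2]]. injection H2; intros; subst; auto.
  - destruct H as [H|H]; [apply IHt in H|]; intuition.
Qed.

Lemma step_atom_in_term t t' : step t t' -> forall x, atom_in_term x t' -> atom_in_term x t.
Proof.
  induction 1; intros x H'; simpl in *; intuition.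
  - apply atom_in_term_tsubst in H'. destruct H' as [H|[[|n] H]]; simpl in *; auto. contradiction.
  - unfold tsubst1 in H'. apply atom_in_term_tren in H'.
    destruct H' as [[|z] [H1 H2]]; simpl in *; subst; auto.
Qed.

Lemma red_atom_in_term t t' : red t t' -> forall x, atom_in_term x t' -> atom_in_term x t.
Proof. induction 1; intros; eauto using step_atom_in_term. Qed.

Lemma fren_ext_atoms A : forall f g, (forall x, atom_in_form x A -> f x = g x) ->
  fren f A = fren g A.
Proof. induction A; intros f g H; simpl in *; f_equal; auto. apply IHA. intros [|x] Hx; simpl; auto. Qed.

Lemma tren_ext_atoms t : forall f g, (forall x, atom_in_term x t -> f x = g x) ->
  tren f t = tren g t.
Proof.
  induction t; intros f g H; simpl in *; f_equal; auto using fren_ext_atoms.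
  apply IHt. intros [|x] Hx; simpl; auto.
Qed.

(* Left inverse of instantiating the bound atom with [Y], on terms where [Y] is fresh. *)
Definition unshift_at (Y k : nat) : nat := if Nat.eqb k Y then 0 else S k.

Lemma unshift_at_scons Y k : k <> S Y -> unshift_at Y (scons Y (fun n => n) k) = k.
Proof.
  intros Hk. destruct k as [|k]; simpl; unfold unshift_at; [now rewrite Nat.eqb_refl|].
  destruct (Nat.eqb_spec k Y); congruence.
Qed.

Lemma fren_unshift_fsubst1 A Y : ~ atom_in_form Y (All A) ->
  fren (unshift_at Y) (fsubst1 A Y) = A.
Proof.
  intros HY. unfold fsubst1. rewrite fren_comp. rewrite <- (fren_id A (fun k => k)) at 2; auto.
  apply fren_ext_atoms. intros k Hk. apply unshift_at_scons. intros ->. auto.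
Qed.

Lemma tren_unshift_tsubst1 w Y : ~ atom_in_term Y (TLam w) ->
  tren (unshift_at Y) (tsubst1 w Y) = w.
Proof.
  intros HY. unfold tsubst1. rewrite tren_comp. rewrite <- (tren_id w (fun k => k)) at 2; auto.
  apply tren_ext_atoms. intros k Hk. apply unshift_at_scons. intros ->. auto.
Qed.

Definition neutral (t : term) : Prop :=
  match t with Lam _ | TLam _ => False | _ => True end.

(* Closed neutral normal terms are constant-headed, so their type can only
   mention atoms that occur in the term. *)
Lemma atom_in_type_neutral t : forall T, has_type [] t T -> normal t -> neutral t ->
  forall x, atom_in_form x T -> atom_in_term x t.
Proof.
  induction t; intros T Ht Hn Hneu y Hy; simpl in *; try contradiction.
  - inversion Ht; subst. match goal with H : nth_error [] ?k = _ |- _ => destruct k; discriminate end.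
  - inversion Ht; subst; auto.
  - inversion Ht as [| | |? ? ? A ? Ht1 Ht2| |]; subst. left.
    apply (IHt1 (Arr A T)); simpl; auto.
    + exact (normal_app_l _ _ Hn).
    + destruct t1; simpl; auto.
      * exact (Hn _ (st_beta _ _)).
      * inversion Ht1.
  - inversion Ht as [| | | | |? ? A ? Ht1 HT]; subst.
    unfold fsubst1 in Hy. apply atom_in_form_fren in Hy.
    destruct Hy as [[|z] [Hz ->]]; simpl; [right; reflexivity | left].
    apply (IHt (All A)); simpl; auto.
    + exact (normal_tapp _ _ Hn).
    + destruct t; simpl; auto.
      * inversion Ht1.
      * exact (Hn _ (st_tbeta _ _)).
Qed.

(** * The I-phase interpretation *)

Fixpoint cst_headed (t : term) : Prop :=
  match t with
  | Cst _ => True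
  | App t _ | TApp t _ => cst_headed t
  | _ => False
  end.

Lemma step_cst_headed t t' : step t t' -> cst_headed t -> cst_headed t'.
Proof. induction 1; simpl; intuition. Qed.

Lemma red_cst_headed t t' : red t t' -> cst_headed t -> cst_headed t'.
Proof. induction 1; eauto using step_cst_headed. Qed.

Lemma cst_headed_apply_args Ts : forall h, cst_headed h -> cst_headed (apply_args h Ts).
Proof. induction Ts as [|[s|X] Ts IH]; intros h H; simpl; auto. Qed.

Lemma normal_app_cst_headed n s : cst_headed n -> normal n -> normal s -> normal (App n s).
Proof.
  intros Hh Hn Hs x H. inversion H; subst; simpl in Hh; try contradiction.
  - eapply Hn; eauto.
  - eapply Hs; eauto.
Qed.

Lemma normal_tapp_cst_headed n Y : cst_headed n -> normal n -> normal (TApp n Y).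
Proof. intros Hh Hn x H. inversion H; subst; simpl in Hh; try contradiction. eapply Hn; eauto. Qed.

Lemma sem_cst A : sem A (Cst A).
Proof. split; [exact I|]. exists (Cst A). repeat split; [apply rt_refl | apply normal_cst | constructor]. Qed.

Lemma sem_red_expand A t u : closed t -> red t u -> sem A u -> sem A t.
Proof. intros Hc Hr [_ [n [Hn Hsn]]]. split; auto. exists n. split; [eapply rt_trans|]; eauto. Qed.

Lemma sem_app_cst_headed h s B C : cst_headed h ->
  sem (Arr B C) h -> sem B s -> sem C (App h s).
Proof.
  intros Hh [Hch [n [Hrn [Hn Htn]]]] [Hcs [s' [Hrs [Hs' Hts]]]].
  split; [split; auto|]. exists (App n s'). repeat split.
  - eapply rt_trans; [apply red_app_l | apply red_app_r]; eauto.
  - apply normal_app_cst_headed; eauto using red_cst_headed.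
  - eapply ty_app; eauto.
Qed.

Lemma sem_tapp_cst_headed h A Y : cst_headed h -> sem (All A) h -> sem (fsubst1 A Y) (TApp h Y).
Proof.
  intros Hh [Hch [n [Hrn [Hn Htn]]]].
  split; [exact Hch|]. exists (TApp n Y). repeat split.
  - apply red_tapp; auto.
  - apply normal_tapp_cst_headed; eauto using red_cst_headed.
  - constructor; auto.
Qed.

(* If [u] reduces to an abstraction, the normal form of [u c^B] is
   [w'[x:=c^B]]; putting the variable back for the constant types [w']. *)
Lemma sem_arr_of_app_cst u B C : sem C (App u (Cst B)) -> sem (Arr B C) u.
Proof.
  intros [[Hc _] [n [Hr [Hn Ht]]]]. split; [exact Hc|].
  destruct (red_app_normal_inv u (Cst B) n (normal_cst B) Hr Hn) as [[u' [Hru ->]]|[w [Hrw Hsw]]].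
  - inversion Ht as [| | |? ? ? A ? Htu HtB| |]; subst. inversion HtB; subst.
    exists u'. repeat split; eauto using normal_app_l.
  - assert (Hs : var_or_cst_subst (scons (Cst B) Var))
      by (intros [|m]; simpl; eauto).
    destruct (red_tsubst_normal_inv _ _ _ Hs Hsw Hn) as [w' [Hrw' [Hnw' ->]]].
    exists (Lam w'). repeat split.
    + eapply rt_trans; [exact Hrw | apply red_lam; exact Hrw'].
    + apply normal_lam; auto.
    + constructor. apply (has_type_tsubst_inv w' [] [B] _ C Hs); auto.
      intros [|m] X HX; inversion HX; subst; simpl; auto.
Qed.

(* Renaming the fresh [Y] back to the bound atom undoes the instantiation,
   both in the normal form and in its type. *)
Lemma sem_all_of_tapp_fresh u A Y : ~ atom_in_term Y u -> ~ atom_in_form Y (All A) ->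
  sem (fsubst1 A Y) (TApp u Y) -> sem (All A) u.
Proof.
  intros HYu HYA [Hc [n [Hr [Hn Ht]]]]. split; [exact Hc|].
  destruct (red_tapp_normal_inv u Y n Hr Hn) as [[u' [Hru ->]]|[w [Hrw Hsw]]].
  - inversion Ht as [| | | | |? ? A' ? Htu HA]; subst.
    assert (HYA' : ~ atom_in_form Y (All A')).
    { intros HY. apply HYu. apply (red_atom_in_term _ _ Hru).
      apply (atom_in_type_neutral u' (All A')); auto.
      - exact (normal_tapp _ _ Hn).
      - destruct u'; simpl; auto; [inversion Htu | exact (Hn _ (st_tbeta _ _))]. }
    assert (A' = A) as ->.
    { rewrite <- (fren_unshift_fsubst1 A' Y), <- (fren_unshift_fsubst1 A Y); auto.
      congruence. }
    exists u'. repeat split; eauto using normal_tapp.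
  - destruct (red_tren_normal_inv _ _ _ Hsw Hn) as [w' [Hrw' [Hnw' ->]]].
    assert (HYw : ~ atom_in_term Y (TLam w')).
    { intros HY. apply HYu. apply (red_atom_in_term _ _ Hrw), (red_atom_in_term _ _ (red_tlam _ _ Hrw')), HY. }
    apply (has_type_tren _ _ _) with (xi := unshift_at Y) in Ht. simpl in Ht.
    fold (tsubst1 w' Y) in Ht.
    rewrite tren_unshift_tsubst1, fren_unshift_fsubst1 in Ht; auto.
    exists (TLam w'). repeat split.
    + eapply rt_trans; [exact Hrw | apply red_tlam; exact Hrw'].
    + apply normal_tlam; auto.
    + constructor. exact Ht.
Qed.

Definition sem_sub_dag_cst_headed (A : form) (rho : nat -> nat) : Prop :=
  forall t, cst_headed t -> sem (fren rho A) t -> dag A rho t.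

Definition dag_sub_sem (A : form) (rho : nat -> nat) : Prop :=
  forall t, dag A rho t -> sem (fren rho A) t.

Lemma sem_sub_dag_cst_headed_arr B C rho : dag_sub_sem B rho ->
  sem_sub_dag_cst_headed C rho -> sem_sub_dag_cst_headed (Arr B C) rho.
Proof.
  intros HB HC t Ht Hs. split; [exact (proj1 Hs)|].
  exists t. split; [apply rt_refl|]. intros s Hs'.
  rewrite subst1_eta_body. apply HC; [exact Ht|].
  apply sem_app_cst_headed with (fren rho B); auto.
Qed.

Lemma sem_sub_dag_cst_headed_all B rho : (forall Y, sem_sub_dag_cst_headed B (scons Y rho)) ->
  sem_sub_dag_cst_headed (All B) rho.
Proof.
  intros HB t Ht Hs. split; [exact (proj1 Hs)|].
  exists t. split; [apply rt_refl|]. intros Y.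
  rewrite tsubst1_teta_body. apply HB; [exact Ht|].
  rewrite fren_scons. apply sem_tapp_cst_headed; auto.
Qed.

Lemma dag_sub_sem_arr B C rho : sem_sub_dag_cst_headed B rho ->
  dag_sub_sem C rho -> dag_sub_sem (Arr B C) rho.
Proof.
  intros HB HC t [Hc [u [Hr Hu]]]. apply sem_red_expand with u; auto.
  apply sem_arr_of_app_cst. rewrite <- subst1_eta_body. apply HC, Hu.
  apply HB; [exact I | apply sem_cst].
Qed.

Lemma dag_sub_sem_all B rho : (forall Y, dag_sub_sem B (scons Y rho)) -> dag_sub_sem (All B) rho.
Proof.
  intros HB t [Hc [u [Hr Hu]]]. apply sem_red_expand with u; auto.
  destruct (exists_fresh_atom u (fren rho (All B))) as [Y [HYu HYB]].
  apply sem_all_of_tapp_fresh with Y; auto.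
  rewrite <- fren_scons, <- tsubst1_teta_body. apply HB, Hu.
Qed.

Lemma sem_sub_dag_cst_headed_and_dag_sub_sem A : forall rho,
  sem_sub_dag_cst_headed A rho /\ dag_sub_sem A rho.
Proof.
  induction A as [X | B IHB C IHC | B IHB]; intros rho.
  - split; intros t; simpl; auto.
  - split.
    + apply sem_sub_dag_cst_headed_arr; [apply IHB | apply IHC].
    + apply dag_sub_sem_arr; [apply IHB | apply IHC].
  - split.
    + apply sem_sub_dag_cst_headed_all. intros Y; apply IHB.
    + apply dag_sub_sem_all. intros Y; apply IHB.
Qed.

Theorem mainTheorem9 : forall A : form,
  (forall (D : form) (Ts : list arg),
      Forall arg_ok Ts ->
      sem A (apply_args (Cst D) Ts) -> dagger A (apply_args (Cst D) Ts)) /\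
  (forall t : term, dagger A t -> sem A t).
Proof.
  intros A.
  destruct (sem_sub_dag_cst_headed_and_dag_sub_sem A (fun n => n)) as [Hcst Hsound].
  unfold sem_sub_dag_cst_headed, dag_sub_sem in *.
  rewrite (fren_id A (fun n => n)) in Hcst, Hsound by reflexivity.
  split.
  - (* closedness of the arguments is already part of [sem] *)
    intros D Ts _. apply Hcst, cst_headed_apply_args. exact I.
  - exact Hsound.
Qed.
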